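(* Let $e_b>0$ and define $\xi$ by $$\xi e_b=\tfrac12-\tfrac{1}{2\sqrt2}(1-3e_b)+\sqrt{\tfrac{1-(1-3e_b)^2}{24}} .$$ Assume $\xi\ge1$, $e_b<\frac{1}{2(1+\xi)}$ and $e_b<\frac{1}{2\xi}$. For $a\in[0,e_b]$ consider the initial triple $(p_X,p_Y,p_Z)=(e_b-a,\;a,\;\xi e_b-a)$. Fix any finite sequence of B steps and P steps whose first step is a B step, let $(p_X',p_Y',p_Z')$ be the result of applying it, and let $R(a)=1-H_2(p_X'+p_Y')-H_2(p_Z'+p_Y')$. Then the minimum of $R(a)$ over $a\in[0,e_b]$ (the worst case) is attained at $a=0$.
   Context: $H_2(p)=-p\log_2 p-(1-p)\log_2(1-p)$. A B step maps $(p_X,p_Y,p_Z)$ to $p_X'=(p_X^2+p_Y^2)/p_S$, $p_Y'=2p_Xp_Y/p_S$, $p_Z'=2(1-p_X-p_Y-p_Z)p_Z/p_S$ with $p_S=1-2(p_X+p_Y)(1-p_X-p_Y)$. A P step maps $(p_X,p_Y,p_Z)$, with $p_I=1-p_X-p_Y-p_Z$, to $p_X'=3p_I^2(p_X+p_Y)+6p_Ip_Xp_Z+3p_X^2p_Y+p_X^3$, $p_Y'=6p_Ip_Yp_Z+3p_X(p_Y^2+p_Z^2)+3p_Yp_Z^2+p_Y^3$, $p_Z'=3p_I(p_Y^2+p_Z^2)+6p_Xp_Yp_Z+3p_Y^2p_Z+p_Z^3$. This is the (worst-case) two-photon SARG04 initial state, with $e_b$ the bit error rate and $a$ the $Y$-error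 rate. *)

From Stdlib Require Import Reals List.
Open Scope R_scope.

(* base-2 logarithm; Stdlib's ln is total with ln x = 0 for x <= 0,
   so p * log2 p = 0 at p = 0 (the usual 0 log 0 = 0 convention). *)
Definition log2 (x : R) : R := ln x / ln 2.

Definition H2 (p : R) : R := - p * log2 p - (1 - p) * log2 (1 - p).

(* error-rate triples (p_X, p_Y, p_Z) *)
Definition triple := (R * R * R)%type.

Definition B_step (t : triple) : triple :=
  let '(pX, pY, pZ) := t in
  let pS := 1 - 2 * (pX + pY) * (1 - pX - pY) in
  ((pX ^ 2 + pY ^ 2) / pS,
   2 * pX * pY / pS,
   2 * (1 - pX - pY - pZ) * pZ / pS).

Definition P_step (t : triple) : triple :=
  let '(pX, pY, pZ) := t in
  let pI := 1 - pX - pY - pZ in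
  (3 * pI ^ 2 * (pX + pY) + 6 * pI * pX * pZ + 3 * pX ^ 2 * pY + pX ^ 3,
   6 * pI * pY * pZ + 3 * pX * (pY ^ 2 + pZ ^ 2) + 3 * pY * pZ ^ 2 + pY ^ 3,
   3 * pI * (pY ^ 2 + pZ ^ 2) + 6 * pX * pY * pZ + 3 * pY ^ 2 * pZ + pZ ^ 3).

Inductive step := Bs | Ps.

Definition apply_step (s : step) (t : triple) : triple :=
  match s with Bs => B_step t | Ps => P_step t end.

(* apply the steps in list order: the head of the list is applied first *)
Definition apply_steps (ss : list step) (t : triple) : triple :=
  fold_left (fun acc s => apply_step s acc) ss t.

Definition xi_of (eb : R) : R :=
  (1/2 - 1 / (2 * sqrt 2) * (1 - 3 * eb)
   + sqrt ((1 - (1 - 3 * eb) ^ 2) / 24)) / eb.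

(* initial (worst-case two-photon SARG04) triple *)
Definition init_triple (eb xi a : R) : triple := (eb - a, a, xi * eb - a).

Definition rate (ss : list step) (eb xi a : R) : R :=
  let '(pX, pY, pZ) := apply_steps ss (init_triple eb xi a) in
  1 - H2 (pX + pY) - H2 (pZ + pY).

From Stdlib Require Import Reals List Psatz.
Open Scope R_scope.

(* In the biases A = 1 - 2 (pX + pY), B = 1 - 2 (pY + pZ), C = 1 - 2 (pX + pZ)
   a B step is (A, B, C) |-> (2 A, B^2 + C^2, 2 B C) / (1 + A^2), a P step is
   (A, B, C) |-> (A^3, B (3 - B^2) / 2, C (3 A^2 - C^2) / 2), and the rate is
   1 - H2 ((1 - A) / 2) - H2 ((1 - B) / 2).  Along the initial triples A and B do
   not depend on a while C increases with a.  After the first B step the biases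
   lie in the region 0 <= C <= A <= 1, C <= B <= 1, which both steps preserve and
   on which they are nondecreasing in (B, C) for fixed A.  So the final B
   increases with a, and since H2 increases on [0, 1/2], the rate is smallest at
   a = 0.  Only the inequalities on xi enter, not its formula. *)

Lemma xlnx_ge_tangent (p q : R) :
  0 <= p -> 0 < q -> p * ln q + p - q <= p * ln p.
Proof.
  intros Hp Hq. destruct (Req_dec p 0) as [->|Hp0]; [lra|].
  assert (Hqp : 0 < q / p) by (apply Rdiv_lt_0_compat; lra).
  assert (Hexp := exp_ineq1_le (ln (q / p))).
  rewrite exp_ln in Hexp by exact Hqp.
  unfold Rdiv in Hexp; rewrite ln_mult, ln_Rinv in Hexp by (try apply Rinv_0_lt_compat; lra).
  assert (Hscaled : p * (ln q - ln p) <= p * (q * / p - 1))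
    by (apply Rmult_le_compat_l; lra).
  replace (p * (q * / p - 1)) with (q - p) in Hscaled by (field; lra).
  lra.
Qed.

(* Gibbs: H2 p1 is at most the cross entropy of p1 against p2, which is at
   most H2 p2 because ln p2 <= ln (1 - p2) when p2 <= 1/2. *)
Lemma H2_le_half (p1 p2 : R) : 0 <= p1 -> p1 <= p2 -> p2 <= 1 / 2 -> H2 p1 <= H2 p2.
Proof.
  intros Hp1 H12 Hp2.
  destruct (Req_dec p1 p2) as [<-|Hne]; [lra|].
  assert (Hln2 : 0 < ln 2) by (pose proof ln_lt_2; lra).
  assert (Hdef : forall p, H2 p = (- p * ln p - (1 - p) * ln (1 - p)) / ln 2)
    by (intro p; unfold H2, log2; field; lra).
  assert (Hgibbs1 := xlnx_ge_tangent p1 p2 Hp1 ltac:(lra)).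
  assert (Hgibbs2 := xlnx_ge_tangent (1 - p1) (1 - p2) ltac:(lra) ltac:(lra)).
  assert (Hln : ln p2 <= ln (1 - p2)).
  { destruct (Rle_lt_or_eq p2 (1 - p2)) as [Hlt|<-]; [lra| |lra].
    apply Rlt_le, ln_increasing; lra. }
  assert (Hcross : 0 <= (p2 - p1) * (ln (1 - p2) - ln p2)) by (apply Rmult_le_pos; lra).
  rewrite !Hdef; unfold Rdiv.
  apply Rmult_le_compat_r; [apply Rlt_le, Rinv_0_lt_compat; lra|].
  nra.
Qed.

Definition biasXY (t : triple) : R := let '(pX, pY, pZ) := t in 1 - 2 * (pX + pY).
Definition biasYZ (t : triple) : R := let '(pX, pY, pZ) := t in 1 - 2 * (pY + pZ).
Definition biasXZ (t : triple) : R := let '(pX, pY, pZ) := t in 1 - 2 * (pX + pZ).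

Lemma B_step_denom_pos (s : R) : 0 < 1 - 2 * s * (1 - s).
Proof. nra. Qed.

Lemma biasXY_B_step (t : triple) :
  biasXY (B_step t) = 2 * biasXY t / (1 + biasXY t ^ 2).
Proof.
  destruct t as [[x y] z]; cbn.
  assert (H := B_step_denom_pos (x + y)).
  field; split; nra.
Qed.

Lemma biasYZ_B_step (t : triple) :
  biasYZ (B_step t) = (biasYZ t ^ 2 + biasXZ t ^ 2) / (1 + biasXY t ^ 2).
Proof.
  destruct t as [[x y] z]; cbn.
  assert (H := B_step_denom_pos (x + y)).
  field; split; nra.
Qed.

Lemma biasXZ_B_step (t : triple) :
  biasXZ (B_step t) = 2 * biasYZ t * biasXZ t / (1 + biasXY t ^ 2).
Proof.
  destruct t as [[x y] z]; cbn.
  assert (H := B_step_denom_pos (x + y)).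
  field; split; nra.
Qed.

Lemma biasXY_P_step (t : triple) : biasXY (P_step t) = biasXY t ^ 3.
Proof. destruct t as [[x y] z]; cbn; ring. Qed.

Lemma biasYZ_P_step (t : triple) :
  biasYZ (P_step t) = biasYZ t * (3 - biasYZ t ^ 2) / 2.
Proof. destruct t as [[x y] z]; cbn; field. Qed.

Lemma biasXZ_P_step (t : triple) :
  biasXZ (P_step t) = biasXZ t * (3 * biasXY t ^ 2 - biasXZ t ^ 2) / 2.
Proof. destruct t as [[x y] z]; cbn; field. Qed.

Definition admissible (t : triple) : Prop :=
  0 <= biasXY t <= 1 /\ 0 <= biasXZ t <= biasXY t /\ biasXZ t <= biasYZ t <= 1.

Definition bias_le (t1 t2 : triple) : Prop :=
  biasXY t1 = biasXY t2 /\ 0 <= biasYZ t1 <= biasYZ t2 /\ 0 <= biasXZ t1 <= biasXZ t2.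

Lemma Rdiv_le_compat_r (x y d : R) : 0 < d -> x <= y -> x / d <= y / d.
Proof.
  intros Hd Hxy; unfold Rdiv.
  apply Rmult_le_compat_r; [apply Rlt_le, Rinv_0_lt_compat|]; lra.
Qed.

Lemma Rdiv_le_0_compat (x d : R) : 0 < d -> 0 <= x -> 0 <= x / d.
Proof. intros Hd Hx; rewrite <- (Rdiv_0_l d); apply Rdiv_le_compat_r; lra. Qed.

Lemma Rdiv_le_1 (x d : R) : 0 < d -> x <= d -> x / d <= 1.
Proof. intros Hd Hx; rewrite <- (Rdiv_diag d) by lra; apply Rdiv_le_compat_r; lra. Qed.

Lemma odd_cubic_le (a x y : R) :
  0 <= x -> x <= y -> y <= a -> x * (3 * a ^ 2 - x ^ 2) <= y * (3 * a ^ 2 - y ^ 2).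
Proof.
  intros Hx Hxy Hya.
  assert (H : 0 <= (y - x) * (3 * a ^ 2 - (x ^ 2 + x * y + y ^ 2)))
    by (apply Rmult_le_pos; nra).
  nra.
Qed.

Lemma B_step_admissible (t : triple) :
  0 <= biasXY t <= 1 -> 0 <= biasYZ t <= 1 -> 0 <= biasXZ t ->
  biasYZ t * biasXZ t <= biasXY t ->
  biasYZ t ^ 2 + biasXZ t ^ 2 <= 1 + biasXY t ^ 2 ->
  admissible (B_step t).
Proof.
  unfold admissible; rewrite biasXY_B_step, biasYZ_B_step, biasXZ_B_step.
  set (A := biasXY t); set (B := biasYZ t); set (C := biasXZ t).
  intros HA HB HC HBC Hsq.
  assert (HD : 0 < 1 + A ^ 2) by nra.
  repeat split.
  - apply Rdiv_le_0_compat; lra.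
  - apply Rdiv_le_1; nra.
  - apply Rdiv_le_0_compat; nra.
  - apply Rdiv_le_compat_r; nra.
  - apply Rdiv_le_compat_r; pose proof (pow2_ge_0 (B - C)); nra.
  - apply Rdiv_le_1; lra.
Qed.

Lemma P_step_admissible (t : triple) : admissible t -> admissible (P_step t).
Proof.
  unfold admissible; rewrite biasXY_P_step, biasYZ_P_step, biasXZ_P_step.
  set (A := biasXY t); set (B := biasYZ t); set (C := biasXZ t).
  intros (HA & HC & HCB).
  assert (HC0 := odd_cubic_le A 0 C ltac:(lra) ltac:(lra) ltac:(lra)).
  assert (HCA := odd_cubic_le A C A ltac:(lra) ltac:(lra) ltac:(lra)).
  assert (HB1 := odd_cubic_le 1 B 1 ltac:(lra) ltac:(lra) ltac:(lra)).
  assert (HCB' := odd_cubic_le 1 C B ltac:(lra) ltac:(lra) ltac:(lra)).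
  assert (HA2 : 0 <= C * (1 - A ^ 2)) by (apply Rmult_le_pos; nra).
  repeat split; nra.
Qed.

Lemma step_admissible (s : step) (t : triple) : admissible t -> admissible (apply_step s t).
Proof.
  intros Ht; destruct s; cbn [apply_step]; [|exact (P_step_admissible t Ht)].
  destruct Ht as (HA & HC & HCB).
  apply B_step_admissible; nra.
Qed.

Lemma B_step_bias_le (t1 t2 : triple) : bias_le t1 t2 -> bias_le (B_step t1) (B_step t2).
Proof.
  unfold bias_le; rewrite !biasXY_B_step, !biasYZ_B_step, !biasXZ_B_step.
  intros (<- & HB & HC).
  assert (HD : 0 < 1 + biasXY t1 ^ 2) by nra.
  repeat split.
  - apply Rdiv_le_0_compat; nra.
  - apply Rdiv_le_compat_r; nra.
  - apply Rdiv_le_0_compat; nra.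
  - apply Rdiv_le_compat_r; nra.
Qed.

Lemma P_step_bias_le (t1 t2 : triple) :
  admissible t2 -> bias_le t1 t2 -> bias_le (P_step t1) (P_step t2).
Proof.
  unfold admissible, bias_le; rewrite !biasXY_P_step, !biasYZ_P_step, !biasXZ_P_step.
  intros (HA & HC & HCB) (EA & HB12 & HC12).
  rewrite EA in *.
  assert (HB0 := odd_cubic_le 1 0 (biasYZ t1) ltac:(lra) ltac:(lra) ltac:(lra)).
  assert (HBle := odd_cubic_le 1 (biasYZ t1) (biasYZ t2) ltac:(lra) ltac:(lra) ltac:(lra)).
  assert (HC0 := odd_cubic_le (biasXY t2) 0 (biasXZ t1) ltac:(lra) ltac:(lra) ltac:(lra)).
  assert (HCle := odd_cubic_le (biasXY t2) (biasXZ t1) (biasXZ t2)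
                    ltac:(lra) ltac:(lra) ltac:(lra)).
  repeat split; nra.
Qed.

Lemma step_bias_le (s : step) (t1 t2 : triple) :
  admissible t2 -> bias_le t1 t2 -> bias_le (apply_step s t1) (apply_step s t2).
Proof.
  intros Ht2 H12; destruct s; cbn [apply_step].
  - exact (B_step_bias_le t1 t2 H12).
  - exact (P_step_bias_le t1 t2 Ht2 H12).
Qed.

Lemma steps_admissible (ss : list step) (t : triple) :
  admissible t -> admissible (apply_steps ss t).
Proof.
  unfold apply_steps; revert t.
  induction ss as [|s ss IH]; intros t Ht; cbn [fold_left]; [exact Ht|].
  apply IH, step_admissible, Ht.
Qed.

Lemma steps_bias_le (ss : list step) (t1 t2 : triple) :
  admissible t2 -> bias_le t1 t2 -> bias_le (apply_steps ss t1) (apply_steps ss t2).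
Proof.
  unfold apply_steps; revert t1 t2.
  induction ss as [|s ss IH]; intros t1 t2 Ht2 H12; cbn [fold_left]; [exact H12|].
  apply IH; [apply step_admissible | apply step_bias_le]; assumption.
Qed.

Definition key_rate (t : triple) : R :=
  let '(pX, pY, pZ) := t in 1 - H2 (pX + pY) - H2 (pZ + pY).

Lemma key_rate_biases (t : triple) :
  key_rate t = 1 - H2 ((1 - biasXY t) / 2) - H2 ((1 - biasYZ t) / 2).
Proof.
  destruct t as [[x y] z]; cbn.
  replace ((1 - (1 - 2 * (x + y))) / 2) with (x + y) by field.
  replace ((1 - (1 - 2 * (y + z))) / 2) with (z + y) by field.
  reflexivity.
Qed.

Lemma key_rate_le (t1 t2 : triple) :
  admissible t2 -> bias_le t1 t2 -> key_rate t1 <= key_rate t2.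
Proof.
  rewrite !key_rate_biases.
  intros (_ & _ & _ & HB2) (EA & HB12).
  rewrite EA.
  enough (H2 ((1 - biasYZ t2) / 2) <= H2 ((1 - biasYZ t1) / 2)) by lra.
  apply H2_le_half; lra.
Qed.

Section FirstBStep.

Variables (eb xi : R).
Hypothesis eb_pos : 0 < eb.
Hypothesis xi_ge1 : 1 <= xi.
Hypothesis eb_xi_small : eb + xi * eb < 1 / 2.

Lemma init_bias_le (a : R) : 0 <= a -> bias_le (init_triple eb xi 0) (init_triple eb xi a).
Proof. intros Ha; unfold bias_le; cbn; nra. Qed.

Lemma B_step_init_admissible (a : R) :
  0 <= a <= eb -> admissible (B_step (init_triple eb xi a)).
Proof.
  intros Ha.
  assert (Hu : eb <= xi * eb) by nra.
  apply B_step_admissible; cbn; set (u := xi * eb) in *.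
  - lra.
  - lra.
  - lra.
  (* C is largest at a = eb, where it equals 1 - 2 u + 2 eb. *)
  - assert (0 <= (1 - 2 * u) * (eb - a)) by (apply Rmult_le_pos; lra).
    assert (0 <= (u - eb) * (1 - u)) by (apply Rmult_le_pos; lra).
    nra.
  - assert (0 <= (eb - a) * (1 - 2 * eb - 2 * u + 2 * a)) by (apply Rmult_le_pos; lra).
    assert (0 <= (1 - 2 * u) * (u - eb)) by (apply Rmult_le_pos; lra).
    nra.
Qed.

Lemma rate_min_at_zero (rest : list step) (a : R) :
  0 <= a <= eb -> rate (Bs :: rest) eb xi 0 <= rate (Bs :: rest) eb xi a.
Proof.
  intros Ha.
  change (key_rate (apply_steps rest (B_step (init_triple eb xi 0)))
          <= key_rate (apply_steps rest (B_step (init_triple eb xi a)))).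
  assert (Hadm := B_step_init_admissible a Ha).
  apply key_rate_le; [now apply steps_admissible|].
  apply steps_bias_le; [exact Hadm|].
  apply B_step_bias_le, init_bias_le; lra.
Qed.

End FirstBStep.

Theorem corollary2 (eb : R) (rest : list step) :
  0 < eb ->
  1 <= xi_of eb ->
  eb < 1 / (2 * (1 + xi_of eb)) ->
  eb < 1 / (2 * xi_of eb) ->
  forall a : R, 0 <= a <= eb ->
    rate (Bs :: rest) eb (xi_of eb) 0 <= rate (Bs :: rest) eb (xi_of eb) a.
Proof.
  (* The last hypothesis, xi eb < 1/2, already follows from the previous one. *)
  intros Heb Hxi Hsmall _.
  apply rate_min_at_zero; [exact Heb | exact Hxi |].
  apply (Rmult_lt_compat_r (2 * (1 + xi_of eb))) in Hsmall; [|lra].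
  replace (1 / (2 * (1 + xi_of eb)) * (2 * (1 + xi_of eb))) with 1 in Hsmall
    by (field; lra).
  lra.
Qed.
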